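(* Let $H\in\mathbb{R}^{n\times n}$ be a $\mu$-incoherent symmetric positive semi-definite matrix, and let $H=(\grave U+I)D(\grave U+I)^T$ be its LDL decomposition, with $\grave U$ strictly upper triangular and $D$ diagonal with nonnegative entries. Then $$\operatorname{tr}(D)\le\frac{\mu^2}{n}\operatorname{tr}(H^{1/2})^2.$$
   Context: A symmetric matrix $H\in\mathbb{R}^{n\times n}$ is $\mu$-incoherent if it has an eigendecomposition $H=Q\Lambda Q^T$ ($Q$ orthogonal, $\Lambda$ diagonal) such that $|Q_{ij}|\le\mu/\sqrt{n}$ for all $i,j$. $H^{1/2}$ denotes the positive semi-definite square root. *)

From HB Require Import structures.
From mathcomp Require Import all_boot all_order all_algebra.
Set Implicit Arguments. Unset Strict Implicit. Unset Printing Implicit Defensive.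
Import Order.TTheory GRing.Theory Num.Theory.
Local Open Scope ring_scope.

Definition symmetricmx (R : ringType) (n : nat) (H : 'M[R]_n) : Prop := H^T = H.

Definition psdmx (R : numDomainType) (n : nat) (H : 'M[R]_n) : Prop :=
  symmetricmx H /\ forall x : 'cV[R]_n, 0 <= (x^T *m H *m x) ord0 ord0.

Definition orthogonalmx (R : ringType) (n : nat) (Q : 'M[R]_n) : Prop :=
  Q *m Q^T = 1%:M /\ Q^T *m Q = 1%:M.

Definition incoherent (R : rcfType) (n : nat) (mu : R) (H : 'M[R]_n) : Prop :=
  exists (Q L : 'M[R]_n), orthogonalmx Q /\ is_diag_mx L /\
    H = Q *m L *m Q^T /\
    forall i j, `|Q i j| <= mu / Num.sqrt (n%:R).

Definition strictly_upper (R : ringType) (n : nat) (U : 'M[R]_n) : Prop :=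
  forall i j : 'I_n, (j <= i)%N -> U i j = 0.

From Pilot Require Import Defs.
From HB Require Import structures.
From mathcomp Require Import all_boot all_order all_algebra.
From mathcomp Require Import ring lra.
Set Implicit Arguments. Unset Strict Implicit. Unset Printing Implicit Defensive.
Import Order.TTheory GRing.Theory Num.Theory.
Local Open Scope ring_scope.

(* Write c := mu^2/n * tr S, where S = H^{1/2}.  The proof has two halves.
   (1) Incoherence bounds the diagonal of S: if H = Q Lam Q^T then, by
       uniqueness of PSD square roots of commuting matrices,
       S = Q Lam^{1/2} Q^T, so S_kk = sum_j Q_kj^2 sqrt(lam_j) <= c.
   (2) An LDL bound: with W = L^{-1} we have W H W^T = D and (W H)_kk = d_k.
       Cauchy-Schwarz for the form of S gives d_k^2 <= G_kk S_kk where
       G = W S^3 W^T, hence d_k <= c G_kk / d_k.  Summing, tr D <= c tr(S P)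
       for P = S W^T D^+ W S, a symmetric idempotent, and tr(S P) <= tr S. *)

Section PSDForms.
Variable R : realFieldType.

Definition form n (A : 'M[R]_n) (x y : 'cV[R]_n) : R := (x^T *m A *m y) ord0 ord0.
Definition basisv n (i : 'I_n) : 'cV[R]_n := delta_mx i ord0.

Lemma form_basis n (A : 'M[R]_n) i j : form A (basisv i) (basisv j) = A i j.
Proof. by rewrite /form /basisv trmx_delta -rowE -colE !mxE. Qed.

Lemma form_basisl n (A : 'M[R]_n) i x : form A (basisv i) x = (A *m x) i ord0.
Proof. by rewrite /form /basisv trmx_delta -mulmxA -rowE mxE. Qed.

Lemma form_sym n (A : 'M[R]_n) x y : A^T = A -> form A x y = form A y x.
Proof.
move=> sA; rewrite /form.
have trE (M : 'M[R]_1) : M ord0 ord0 = M^T ord0 ord0 by rewrite mxE.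
by rewrite trE !trmx_mul trmxK sA mulmxA.
Qed.

Lemma formDl n (A : 'M[R]_n) x y z : form A (x + y) z = form A x z + form A y z.
Proof. by rewrite /form linearD /= !mulmxDl mxE. Qed.

Lemma formDr n (A : 'M[R]_n) x y z : form A z (x + y) = form A z x + form A z y.
Proof. by rewrite /form !mulmxDr mxE. Qed.

Lemma formZl n (A : 'M[R]_n) a x z : form A (a *: x) z = a * form A x z.
Proof. by rewrite /form linearZ /= -!scalemxAl mxE. Qed.

Lemma formZr n (A : 'M[R]_n) a x z : form A z (a *: x) = a * form A z x.
Proof. by rewrite /form -!scalemxAr mxE. Qed.

Lemma form_addmx n (A B : 'M[R]_n) x y : form (A + B) x y = form A x y + form B x y.
Proof. by rewrite /form mulmxDr mulmxDl mxE. Qed.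

Lemma formMl n (A B : 'M[R]_n) x y : form A (B *m x) y = form (B^T *m A) x y.
Proof. by rewrite /form trmx_mul !mulmxA. Qed.

Lemma formMr n (A B : 'M[R]_n) x y : form A x (B *m y) = form (A *m B) x y.
Proof. by rewrite /form !mulmxA. Qed.

Lemma nonneg_quadratic_disc (a b c : R) : 0 <= a -> 0 <= c ->
  (forall t, 0 <= a + 2 * t * b + t ^+ 2 * c) -> b ^+ 2 <= a * c.
Proof.
move=> a_ge0 c_ge0 hq.
have [c0|c_neq0] := eqVneq c 0.
  subst c; have [->|b_neq0] := eqVneq b 0; first by rewrite expr0n mulr0.
  have := hq (- (a + 1) / (2 * b)).
  have -> : 2 * (- (a + 1) / (2 * b)) * b = - (a + 1).
    by field; rewrite b_neq0.
  rewrite mulr0 addr0; lra.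
have c_gt0 : 0 < c by rewrite lt_def c_neq0 c_ge0.
have := hq (- b / c).
have -> : a + 2 * (- b / c) * b + (- b / c) ^+ 2 * c = a - b ^+ 2 / c by field.
by rewrite subr_ge0 ler_pdivrMr.
Qed.

Lemma psd_form n (A : 'M[R]_n) x : psdmx A -> 0 <= form A x x.
Proof. by case=> _ /(_ x). Qed.

Lemma psd_diag_ge0 n (A : 'M[R]_n) i : psdmx A -> 0 <= A i i.
Proof. by move=> hA; rewrite -form_basis psd_form. Qed.

Lemma psd_trace_ge0 n (A : 'M[R]_n) : psdmx A -> 0 <= \tr A.
Proof. by move=> hA; apply: sumr_ge0 => i _; apply: psd_diag_ge0. Qed.

Lemma psd_cauchy_schwarz n (A : 'M[R]_n) x y : psdmx A ->
  form A x y ^+ 2 <= form A x x * form A y y.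
Proof.
move=> hA; have [sA _] := hA.
apply: nonneg_quadratic_disc; [exact: psd_form | exact: psd_form |] => t.
have := psd_form (x + t *: y) hA.
rewrite formDl !formDr !formZl !formZr (form_sym y x sA).
by move=> /le_trans; apply; rewrite le_eqVlt; apply/orP; left; apply/eqP; ring.
Qed.

Lemma psd_ker n (A : 'M[R]_n) x : psdmx A -> form A x x = 0 -> A *m x = 0.
Proof.
move=> hA hx; apply/matrixP => i j; rewrite ord1 [in RHS]mxE -form_basisl.
have := psd_cauchy_schwarz (basisv i) x hA; rewrite hx mulr0 => h.
by apply/eqP; rewrite -sqrf_eq0 eq_le h sqr_ge0.
Qed.

Lemma psd_diag_mx n (s : 'rV[R]_n) : (forall i, 0 <= s 0 i) -> psdmx (diag_mx s).
Proof.
move=> s_ge0; split; first by rewrite /Defs.symmetricmx tr_diag_mx.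
move=> x; rewrite mul_mx_diag mxE; apply: sumr_ge0 => j _.
by rewrite !mxE mulrAC -expr2 mulr_ge0 ?sqr_ge0.
Qed.

Lemma psd1 n : psdmx (1%:M : 'M[R]_n).
Proof.
have -> : 1%:M = diag_mx (const_mx 1 : 'rV[R]_n) by apply/matrixP=> i j; rewrite !mxE.
by apply: psd_diag_mx => i; rewrite mxE.
Qed.

Lemma psd_congr n (A M : 'M[R]_n) : psdmx A -> psdmx (M^T *m A *m M).
Proof.
move=> hA; have [sA _] := hA; split.
  by rewrite /Defs.symmetricmx !trmx_mul trmxK sA mulmxA.
by move=> x; rewrite -/(form _ x x) -formMr -formMl psd_form.
Qed.

End PSDForms.
Arguments basisv {R n}.
Arguments psd1 {R n}.

Section SquareRoots.
Variable R : realFieldType.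

Lemma psd_sqrt_unique n (T T' : 'M[R]_n) : psdmx T -> psdmx T' ->
  T *m T = T' *m T' -> T *m T' = T' *m T -> T = T'.
Proof.
move=> hT hT' sqE commTT'.
have [sT _] := hT; have [sT' _] := hT'.
set M := T - T'.
have sM : M^T = M by rewrite /M linearB /= sT sT'.
have M_sum : M *m (T + T') = 0.
  by rewrite /M mulmxBl !mulmxDr sqE commTT' [X in _ - X]addrC subrr.
suff My : forall y : 'cV[R]_n, M *m y = 0.
  apply/eqP; rewrite -subr_eq0; apply/eqP/matrixP => i j.
  by have /matrixP/(_ i ord0) := My (basisv j); rewrite /basisv -colE !mxE.
move=> y; set z := M *m y.
(* z is isotropic for T + T', hence for both T and T' *)
have hz : form T z z + form T' z z = 0.
  by rewrite -form_addmx formMl formMr sM M_sum mul0mx /form mulmx0 mul0mx mxE.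
have zT_ge0 := psd_form z hT; have zT'_ge0 := psd_form z hT'.
have zT0 : form T z z = 0 by lra.
have zT'0 : form T' z z = 0 by lra.
have Mz : M *m z = 0 by rewrite /M mulmxBl (psd_ker hT zT0) (psd_ker hT' zT'0) subrr.
have zz0 : form 1%:M z z = 0.
  by rewrite {1}/z formMl mulmx1 sM /form -mulmxA Mz mulmx0 mxE.
by have := psd_ker psd1 zz0; rewrite mul1mx.
Qed.

Lemma comm_diag_map n (T : 'M[R]_n) (l : 'rV[R]_n) (f : R -> R) :
  T *m diag_mx l = diag_mx l *m T ->
  T *m diag_mx (map_mx f l) = diag_mx (map_mx f l) *m T.
Proof.
move=> /matrixP commTl; apply/matrixP => i j.
have := commTl i j; rewrite !mul_mx_diag !mul_diag_mx !mxE.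
have [->|Tij_neq0] := eqVneq (T i j) 0; first by rewrite !mul0r !mulr0.
by move=> h; rewrite (mulfI Tij_neq0 (etrans h (mulrC _ _))) mulrC.
Qed.

End SquareRoots.

Section SpectralSquareRoot.
Variable R : rcfType.

Lemma psd_sqrt_spectral n (Q S : 'M[R]_n) (l : 'rV[R]_n) :
  orthogonalmx Q -> psdmx S -> S *m S = Q *m diag_mx l *m Q^T ->
  S = Q *m diag_mx (map_mx Num.sqrt l) *m Q^T.
Proof.
move=> [QQt QtQ] hS sqS.
set T := Q^T *m S *m Q.
have hT : psdmx T by apply: psd_congr.
have TT : T *m T = diag_mx l.
  rewrite /T -!mulmxA (mulmxA Q) QQt mul1mx (mulmxA S) sqS !mulmxA QtQ mul1mx.
  by rewrite -mulmxA QtQ mulmx1.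
have l_ge0 i : 0 <= l 0 i.
  have := psd_form (T *m basisv i) psd1.
  by rewrite formMl formMr mulmx1 (proj1 hT) TT form_basis mxE eqxx mulr1n.
set T' := diag_mx (map_mx Num.sqrt l).
have hT' : psdmx T' by apply: psd_diag_mx => i; rewrite mxE sqrtr_ge0.
have T'T' : T' *m T' = diag_mx l.
  by rewrite mulmx_diag; congr diag_mx; apply/rowP => j; rewrite !mxE -expr2 sqr_sqrtr.
have commTT' : T *m T' = T' *m T by apply: comm_diag_map; rewrite -TT mulmxA.
have <- := psd_sqrt_unique hT hT' (etrans TT (esym T'T')) commTT'.
by rewrite /T !mulmxA QQt mul1mx -mulmxA QQt mulmx1.
Qed.

End SpectralSquareRoot.

Section TraceBounds.
Variable R : realFieldType.

Lemma congr_diag_le_trace n (Q : 'M[R]_n) (s : 'rV[R]_n) (b : R) k :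
  Q^T *m Q = 1%:M -> (forall j, 0 <= s 0 j) -> (forall i j, `|Q i j| <= b) ->
  (Q *m diag_mx s *m Q^T) k k <= b ^+ 2 * \tr (Q *m diag_mx s *m Q^T).
Proof.
move=> QtQ s_ge0 Qb.
rewrite mxtrace_mulC mulmxA QtQ mul1mx mxtrace_diag mulr_sumr mxE.
apply: ler_sum => j _; rewrite mul_mx_diag !mxE mulrAC -expr2 mulrC.
rewrite [leRHS]mulrC ler_wpM2l //.
have := Qb k j; rewrite ler_norml => /andP[lbQ ubQ].
have : 0 <= (b - Q k j) * (b + Q k j) by apply: mulr_ge0; lra.
nra.
Qed.

(* Multiplying a PSD matrix by an orthogonal projection does not increase
   its trace: tr S - tr (S P) = tr ((1 - P) S (1 - P)) >= 0. *)
Lemma trace_mul_proj_le n (S P : 'M[R]_n) :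
  psdmx S -> P^T = P -> P *m P = P -> \tr (S *m P) <= \tr S.
Proof.
move=> hS sP idemP.
have idemQ : (1%:M - P) *m (1%:M - P) = 1%:M - P.
  by rewrite mulmxBl mul1mx mulmxBr mulmx1 idemP subrr subr0.
have sQ : (1%:M - P)^T = 1%:M - P by rewrite linearB /= trmx1 sP.
have := psd_trace_ge0 (psd_congr (1%:M - P) hS).
rewrite sQ -mulmxA mxtrace_mulC -mulmxA idemQ mulmxBr mulmx1.
by rewrite raddfB /= subr_ge0.
Qed.

(* From d^2 <= a s and s <= c we get d <= c a / d (read as 0 when d = 0). *)
Lemma le_mul_div_of_sqr_le (d a s c : R) : 0 <= d -> 0 <= a -> s <= c ->
  d ^+ 2 <= a * s -> d <= c * d^-1 * a.
Proof.
move=> d_ge0 a_ge0 s_le_c hd.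
have [->|d_neq0] := eqVneq d 0; first by rewrite invr0 mulr0 mul0r.
have d_gt0 : 0 < d by rewrite lt_def d_neq0 d_ge0.
by rewrite mulrAC ler_pdivlMr // -expr2; nra.
Qed.

(* Cauchy-Schwarz for the form of S applied to S W^T e_k and e_k. *)
Lemma diag_cauchy_schwarz n (S W : 'M[R]_n) k : psdmx S ->
  (W *m (S *m S)) k k ^+ 2 <= (W *m (S *m S *m S) *m W^T) k k * S k k.
Proof.
move=> hS; have [sS _] := hS.
have := psd_cauchy_schwarz (S *m (W^T *m basisv k)) (basisv k) hS.
rewrite !formMl !formMr !form_basis !trmxK sS.
by rewrite !mulmxA.
Qed.

(* The Moore-Penrose pseudo-inverse of a diagonal matrix. *)
Definition diag_pinv n (d : 'rV[R]_n) : 'M[R]_n := diag_mx (map_mx GRing.inv d).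

Lemma diag_pinvK n (d : 'rV[R]_n) :
  diag_pinv d *m diag_mx d *m diag_pinv d = diag_pinv d.
Proof.
rewrite /diag_pinv !mulmx_diag; congr diag_mx; apply/rowP => k; rewrite !mxE.
have [->|dk_neq0] := eqVneq (d 0 k) 0; first by rewrite invr0 !mul0r.
by rewrite mulVf // mul1r.
Qed.

Lemma ldl_projection n (S W : 'M[R]_n) (d : 'rV[R]_n) :
  S^T = S -> W *m (S *m S) *m W^T = diag_mx d ->
  let P := S *m W^T *m diag_pinv d *m W *m S in P^T = P /\ P *m P = P.
Proof.
move=> sS WHW P; split.
  by rewrite /P !trmx_mul !trmxK sS /diag_pinv tr_diag_mx !mulmxA.
have -> : P *m P = S *m W^T *m (diag_pinv d *m (W *m (S *m S) *m W^T) *m diag_pinv d)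
                   *m W *m S by rewrite /P !mulmxA.
by rewrite WHW diag_pinvK.
Qed.

Lemma ldl_trace_le n (L S : 'M[R]_n) (d : 'rV[R]_n) (c : R) :
  L \in unitmx -> (forall k, L k k = 1) -> (forall k, 0 <= d 0 k) -> 0 <= c ->
  psdmx S -> S *m S = L *m diag_mx d *m L^T -> (forall k, S k k <= c) ->
  \tr (diag_mx d) <= c * \tr S.
Proof.
move=> L_unit L1 d_ge0 c_ge0 hS sqS Skk_le; have [sS _] := hS.
set W := invmx L.
have WL : W *m L = 1%:M by apply: mulVmx.
have WHW : W *m (S *m S) *m W^T = diag_mx d.
  by rewrite sqS !mulmxA WL mul1mx -mulmxA -trmx_mul WL trmx1 mulmx1.
have WHkk k : (W *m (S *m S)) k k = d 0 k.
  by rewrite sqS !mulmxA WL mul1mx mul_diag_mx !mxE L1 mulr1.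
set G := W *m (S *m S *m S) *m W^T.
have G_ge0 k : 0 <= G k k.
  apply: psd_diag_ge0; have := psd_congr (S *m W^T) hS.
  by rewrite /G trmx_mul trmxK sS !mulmxA.
have trD_le : \tr (diag_mx d) <= c * \tr (diag_pinv d *m G).
  rewrite mxtrace_diag /mxtrace mulr_sumr; apply: ler_sum => k _.
  rewrite mul_diag_mx mxE [map_mx _ _ _ _]mxE mulrA.
  apply: (le_mul_div_of_sqr_le (s := S k k)) => //.
  by rewrite -WHkk diag_cauchy_schwarz.
have [sP idemP] := ldl_projection sS WHW.
have trG : \tr (diag_pinv d *m G) = \tr (S *m (S *m W^T *m diag_pinv d *m W *m S)).
  have -> : diag_pinv d *m G = (diag_pinv d *m W *m S) *m (S *m S *m W^T).
    by rewrite /G !mulmxA.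
  by rewrite mxtrace_mulC !mulmxA.
apply: (le_trans trD_le); rewrite trG ler_wpM2l //.
exact: trace_mul_proj_le.
Qed.

End TraceBounds.

Lemma unitriangular_diag (R : nzRingType) n (U : 'M[R]_n) k :
  strictly_upper U -> (U + 1%:M) k k = 1.
Proof. by move=> hU; rewrite !mxE hU // add0r eqxx mulr1n. Qed.

Lemma unitriangular_unitmx (R : comUnitRingType) n (U : 'M[R]_n) :
  strictly_upper U -> U + 1%:M \in unitmx.
Proof.
move=> hU; have trig : is_trig_mx (U + 1%:M)^T.
  apply/is_trig_mxP => i j lt_ij; rewrite !mxE hU ?(ltnW lt_ij) // add0r.
  by rewrite -val_eqE /= (gtn_eqF lt_ij) mulr0n.
rewrite unitmxE -det_tr det_trig // big1 ?unitr1 // => k _.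
by rewrite mxE unitriangular_diag.
Qed.

Unset Implicit Arguments.
Set Strict Implicit.

Theorem lemma2 (R : rcfType) (n : nat) (mu : R) (H U D S : 'M[R]_n) :
  psdmx H -> incoherent mu H ->
  strictly_upper U -> is_diag_mx D -> (forall i, 0 <= D i i) ->
  H = (U + 1%:M) *m D *m (U + 1%:M)^T ->
  psdmx S -> S *m S = H ->
  \tr D <= mu ^+ 2 / n%:R * (\tr S) ^+ 2.
Proof.
move=> _ [Q [Lam [[QQt QtQ] [dLam [HQ Qb]]]]] hU dD D_ge0 hLDL hS sqS.
have [l Lam_l] := diag_mxP _ dLam; have [d D_d] := diag_mxP _ dD.
have S_spec : S = Q *m diag_mx (map_mx Num.sqrt l) *m Q^T.
  by apply: psd_sqrt_spectral; rewrite ?sqS -?Lam_l //.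
have mu2 : (mu / Num.sqrt n%:R) ^+ 2 = mu ^+ 2 / n%:R.
  by rewrite expr_div_n sqr_sqrtr ?ler0n.
have Skk_le k : S k k <= mu ^+ 2 / n%:R * \tr S.
  rewrite S_spec -mu2; apply: congr_diag_le_trace => // j.
  by rewrite mxE sqrtr_ge0.
have c_ge0 : 0 <= mu ^+ 2 / n%:R * \tr S.
  by apply: mulr_ge0; [rewrite divr_ge0 ?sqr_ge0 ?ler0n | exact: psd_trace_ge0].
rewrite D_d expr2 mulrA; apply: (ldl_trace_le (L := U + 1%:M)) Skk_le => //.
- exact: unitriangular_unitmx.
- by move=> k; apply: unitriangular_diag.
- by move=> k; have := D_ge0 k; rewrite D_d mxE eqxx mulr1n.
- by rewrite sqS hLDL D_d.
Qed.
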